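(* Let $0<\tau<T$, $\lambda>0$, $\kappa_3\in(0,1)$ and $t_3\in(\tau,T)$. For every $\gamma_3\ge\kappa_3/(t_3-\tau)$, any solution $(x(t),y(t))$ on $[\tau,T]$ of \[ x'=y,\qquad y'=-\lambda a^+(t)g(x) \] with $x(t_3)\le\kappa_3$ and $y(t_3)\ge\gamma_3$ satisfies $x(\tau)\le0$ and $y(\tau)\ge\gamma_3$.
   Context: $a\in L^1(\tau,T)$ with positive part $a^+$. $g\colon\mathbb{R}\to[0,+\infty)$ is the extension by zero outside $[0,1]$ of a locally Lipschitz continuous function $g\colon[0,1]\to[0,+\infty)$ with $g(0)=g(1)=0$, $g(s)>0$ for $0<s<1$ and $\lim_{s\to0^+}g(s)/s=0$. Solutions are in the Carathéodory sense. *)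

From HB Require Import structures.
From mathcomp Require Import all_boot all_order all_algebra.
From mathcomp Require Import all_classical all_reals all_analysis.
Set Implicit Arguments. Unset Strict Implicit. Unset Printing Implicit Defensive.
Import Order.TTheory GRing.Theory Num.Theory.
Import numFieldNormedType.Exports.
Local Open Scope classical_set_scope.
Local Open Scope ring_scope.

Definition pos_part (R : realType) (a : R -> R) : R -> R :=
  fun t => Num.max (a t) 0.

Definition locally_lipschitz_on01 (R : realType) (g : R -> R) : Prop :=
  forall s, s \in `[0, 1] ->
    exists2 delta : R, 0 < delta &
    exists L : R, forall u v, u \in `[0, 1] -> v \in `[0, 1] ->
      `|u - s| < delta -> `|v - s| < delta ->
      `|g u - g v| <= L * `|u - v|.

(* Standing hypotheses on g : R -> [0,+oo): extension by zero outside [0,1]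
   of a locally Lipschitz g : [0,1] -> [0,+oo), with g(0)=g(1)=0, g>0 on (0,1),
   and g(s)/s -> 0 as s -> 0^+. *)
Definition g_hyp (R : realType) (g : R -> R) : Prop :=
  [/\ (forall s, 0 <= g s),
      (forall s, s \notin `[0, 1] -> g s = 0),
      locally_lipschitz_on01 g,
      (g 0 = 0 /\ g 1 = 0 /\ forall s, 0 < s < 1 -> 0 < g s) &
      ((fun s => g s / s) @ 0^'+ --> 0)].

Definition L1_on (R : realType) (tau T : R) (a : R -> R) : Prop :=
  (@lebesgue_measure R).-integrable `[tau, T] (EFin \o a).

(* (x, y) is a Caratheodory solution on [tau, T] of
     x' = y,  y' = - lam a^+(t) g(x),
   i.e. x, y are absolutely continuous on [tau,T] and the equations hold a.e.;
   equivalently, the right-hand sides are integrable on [tau,T] and the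
   integral equations hold for every t in [tau,T]. *)
Definition carath_solution (R : realType) (tau T lam : R) (a g x y : R -> R)
  : Prop :=
  [/\ (@lebesgue_measure R).-integrable `[tau, T] (EFin \o y),
      (@lebesgue_measure R).-integrable `[tau, T]
         (EFin \o (fun s => - lam * pos_part a s * g (x s))),
      (forall t, t \in `[tau, T] ->
         x t = x tau + \int[@lebesgue_measure R]_(s in `[tau, t]) y s) &
      (forall t, t \in `[tau, T] ->
         y t = y tau + \int[@lebesgue_measure R]_(s in `[tau, t])
                           (- lam * pos_part a s * g (x s)))].

From HB Require Import structures.
From mathcomp Require Import all_boot all_order all_algebra.
From mathcomp Require Import all_classical all_reals all_analysis.
From mathcomp Require Import lra.
Set Implicit Arguments. Unset Strict Implicit. Unset Printing Implicit Defensive.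
Import Order.TTheory GRing.Theory Num.Theory.
Import numFieldNormedType.Exports.
Local Open Scope classical_set_scope.
Local Open Scope ring_scope.

(* Since a^+ >= 0 and g >= 0, y' <= 0, so y stays above y(t3) >= gamma3 on
   [tau, t3]; integrating x' = y over [tau, t3] then gives
   x(t3) - x(tau) >= gamma3 (t3 - tau) >= kappa3 >= x(t3). *)

Local Notation mu := (@lebesgue_measure _).

Lemma pos_part_ge0 (R : realType) (a : R -> R) (t : R) : 0 <= pos_part a t.
Proof. by rewrite /pos_part le_max lexx orbT. Qed.

Lemma carath_rhs_le0 (R : realType) (lam : R) (a g x : R -> R) (s : R) :
  0 <= lam -> (forall u, 0 <= g u) -> - lam * pos_part a s * g (x s) <= 0.
Proof.
move=> lam_ge0 g_ge0; rewrite -mulrA mulNr oppr_le0.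
by rewrite mulr_ge0 // mulr_ge0 // pos_part_ge0.
Qed.

Lemma Rintegral_le0 d (X : measurableType d) (R : realType)
    (m : {measure set X -> \bar R}) (D : set X) (f : X -> R) :
  measurable D -> m.-integrable D (EFin \o f) ->
  (forall s, D s -> f s <= 0) -> \int[m]_(s in D) f s <= 0.
Proof.
move=> mD intf f_le0.
have := le_Rintegral mD intf (integrable0 m D) f_le0.
by rewrite Rintegral_cst // mul0r.
Qed.

Lemma Rintegral_itv_ge_cst (R : realType) (a b c : R) (f : R -> R) :
  a <= b -> mu.-integrable `[a, b] (EFin \o f) ->
  {in `[a, b], forall s, c <= f s} ->
  c * (b - a) <= \int[mu]_(s in `[a, b]) f s.
Proof.
move=> ab intf c_le_f.
have intc : mu.-integrable `[a, b] (EFin \o cst c).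
  apply: continuous_compact_integrable; first exact: segment_compact.
  exact/continuous_subspaceT/cst_continuous.
have -> : c * (b - a) = \int[mu]_(s in `[a, b]) c.
  rewrite Rintegral_cst // [X in fine X](lebesgue_measure_itv `[a, b]) /=.
  rewrite lte_fin; case: (ltP a b) => // ba.
  have -> : b = a by apply/le_anti/andP.
  by rewrite subrr mulr0.
by apply: le_Rintegral => // s s_ab; apply: c_le_f; rewrite inE.
Qed.

Section nonpositive_rhs.
Variables (R : realType) (tau T : R) (f y : R -> R).
Hypothesis intf : mu.-integrable `[tau, T] (EFin \o f).
Hypothesis f_le0 : {in `[tau, T], forall s, f s <= 0}.
Hypothesis y_eq : {in `[tau, T], forall t,
  y t = y tau + \int[mu]_(s in `[tau, t]) f s}.

Lemma integral_eq_nonincreasing : {in `[tau, T] &, {homo y : s t /~ s <= t}}.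
Proof.
move=> t s t_in s_in st; rewrite (y_eq t_in) (y_eq s_in) lerD2l -subr_le0.
move: s_in t_in; rewrite !in_itv /= => /andP[taus _] /andP[_ tT].
have subT : `[tau, t] `<=` `[tau, T] by apply: subset_itvl; rewrite bnd_simp.
rewrite (@Rintegral_itvB R f (BLeft tau) (BRight t) s) ?bnd_simp //;
  last exact: integrableS intf.
apply: Rintegral_le0 => //.
  by apply: integrableS intf => //; apply: subset_trans subT;
     apply: subset_itvr; rewrite bnd_simp.
move=> u /=; rewrite in_itv /= => /andP[su ut]; apply: f_le0.
by rewrite in_itv /= (le_trans taus (ltW su)) (le_trans ut tT).
Qed.

End nonpositive_rhs.

Theorem lemma2p4 (R : realType) (tau T : R) (a g : R -> R)
  (lam kappa3 t3 gamma3 : R) (x y : R -> R) :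
  0 < tau -> tau < T ->
  L1_on tau T a -> g_hyp g ->
  0 < lam ->
  0 < kappa3 < 1 ->
  tau < t3 < T ->
  kappa3 / (t3 - tau) <= gamma3 ->
  carath_solution tau T lam a g x y ->
  x t3 <= kappa3 -> gamma3 <= y t3 ->
  x tau <= 0 /\ gamma3 <= y tau.
Proof.
move=> _ tauT _ [g_ge0 _ _ _ _] lam_gt0 _ /andP[taut3 t3T] gamma3_ge
  [inty intf x_eq y_eq] xt3 yt3.
have sub3 : `[tau, t3] `<=` `[tau, T] by apply: subset_itvl; rewrite bnd_simp ltW.
have t3_in : t3 \in `[tau, T] by rewrite in_itv /= !ltW.
have y_ge : {in `[tau, t3], forall s, gamma3 <= y s}.
  move=> s; rewrite in_itv /= => /andP[taus st3]; apply: le_trans yt3 _.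
  have s_in : s \in `[tau, T] by rewrite in_itv /= taus (le_trans st3 (ltW t3T)).
  have rhs_le0 u (_ : u \in `[tau, T]) := carath_rhs_le0 a x u (ltW lam_gt0) g_ge0.
  exact: (integral_eq_nonincreasing intf rhs_le0 y_eq t3_in s_in st3).
split; last by apply: y_ge; rewrite in_itv /= lexx ltW.
have kappa3_le : kappa3 <= gamma3 * (t3 - tau) by rewrite -ler_pdivrMr ?subr_gt0.
have inty3 : mu.-integrable `[tau, t3] (EFin \o y) by exact: integrableS inty.
have x_incr : x t3 - x tau = \int[mu]_(s in `[tau, t3]) y s.
  by rewrite (x_eq _ t3_in) addrAC subrr add0r.
have := Rintegral_itv_ge_cst (ltW taut3) inty3 y_ge; rewrite -x_incr.
lra.
Qed.
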